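(* Let $p>3$ be a prime. The number $N_{2,p}$ of $\overline{\mathbb{F}}_p$... more precisely, of $\mathbb{F}_p$-isomorphism classes of elliptic curves $E$ over $\mathbb{F}_p$ that possess an $\mathbb{F}_p$-rational point of order $2$ is \[ N_{2,p}=\begin{cases} \frac{4p+8}{3}, &\text{if } p\equiv 1\pmod{12},\\ \frac{4p+4}{3}, &\text{if } p\equiv 5\pmod{12},\\ \frac{4p+2}{3}, &\text{if } p\equiv 7\pmod{12},\\ \frac{4p-2}{3}, &\text{if } p\equiv 11\pmod{12}. \end{cases} \]
   Context: Isomorphism classes are taken over $\mathbb{F}_p$ (i.e., isomorphisms defined over $\mathbb{F}_p$). ''Possessing 2-torsion over $\mathbb{F}_p$'' means $E(\mathbb{F}_p)$ contains a point of order $2$, equivalently $2\mid \#E(\mathbb{F}_p)$. *)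

From HB Require Import structures.
From mathcomp Require Import all_boot all_order all_algebra.
Set Implicit Arguments. Unset Strict Implicit. Unset Printing Implicit Defensive.
Import GRing.Theory.
Local Open Scope ring_scope.

(* Over F_p with p > 3, every elliptic curve is F_p-isomorphic to a short
   Weierstrass curve  E_{a,b} : y^2 = x^3 + a x + b  with 4a^3+27b^2 <> 0,
   and E_{a,b} ~ E_{a',b'} over F_p iff a' = u^4 a, b' = u^6 b, u in F_p^*. *)

Definition nonsingular (p : nat) (c : 'F_p * 'F_p) : bool :=
  4 * c.1 ^+ 3 + 27 * c.2 ^+ 2 != 0.

Definition wiso (p : nat) (c c' : 'F_p * 'F_p) : bool :=
  [exists u : 'F_p, (u != 0) && (c'.1 == u ^+ 4 * c.1) && (c'.2 == u ^+ 6 * c.2)].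

(* #E(F_p) : affine solutions plus the point at infinity *)
Definition npoints (p : nat) (c : 'F_p * 'F_p) : nat :=
  (#|[set xy : 'F_p * 'F_p | xy.2 ^+ 2 == xy.1 ^+ 3 + c.1 * xy.1 + c.2]|).+1.

(* E(F_p) has a point of order 2, i.e. 2 | #E(F_p) *)
Definition has_2torsion (p : nat) (c : 'F_p * 'F_p) : bool :=
  (2 %| npoints c)%N.

Definition N2 (p : nat) : nat :=
  #|[set [set c' | wiso c c'] |
      c in [set c : 'F_p * 'F_p | nonsingular c && has_2torsion c]]|.

(* The curve y^2 = x^3 + a x + b (with 4 a^3 + 27 b^2 <> 0) has a rational point
   of order 2 iff its cubic has a root: the number of affine points is the sum over
   x of the number of square roots of the cubic at x, which is odd exactly at its
   roots, and a separable cubic has 0, 1 or 3 roots.  Counting pairs (curve, root)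
   and (curve, two distinct roots) shows that the set S of curves with a root has
   (q - 1)(2q - 1)/3 elements.  Isomorphism classes are the orbits of u.(a, b) = (u^4 a, u^6 b) on S, and
   Burnside's lemma counts them: the two square roots of 1 fix all of S, the
   gcd(4, q - 1) - 2 square roots of -1 fix the q - 1 curves with b = 0, and the
   gcd(6, q - 1) - 2 units of order 3 or 6 fix the (q - 1)/gcd(3, q - 1) curves with
   a = 0.  For q = p these gcds only depend on p mod 12. *)

From mathcomp Require Import all_boot all_order all_algebra all_fingroup all_solvable all_field.
From mathcomp Require Import ring zify.
Set Implicit Arguments. Unset Strict Implicit. Unset Printing Implicit Defensive.
Import GRing.Theory.

Lemma card_set_sum (T : finType) (P : pred T) : #|[set x | P x]| = \sum_x P x.
Proof. by rewrite -sum1_card big_mkcond /=; apply: eq_bigr => x _; rewrite inE; case: (P x). Qed.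

Lemma card_set_pair (T U : finType) (P : T -> U -> bool) :
  #|[set xy : T * U | P xy.1 xy.2]| = \sum_x #|[set y | P x y]|.
Proof.
rewrite card_set_sum -(pair_bigA _ (fun x y => nat_of_bool (P x y))) /=.
by apply: eq_bigr => x _; rewrite card_set_sum.
Qed.

Lemma odd_sum (I : Type) (r : seq I) (f : I -> nat) :
  odd (\sum_(i <- r) f i) = odd (\sum_(i <- r) odd (f i)).
Proof. by elim: r => [|i r IHr]; rewrite ?big_nil // !big_cons !oddD IHr; case: odd. Qed.

Lemma sum_andb_eq (T : finType) (Q : pred T) (v : T) : \sum_b (Q b && (b == v)) = Q v.
Proof. by rewrite (bigD1 v) //= eqxx andbT big1 ?addn0 // => b /negbTE->; rewrite andbF. Qed.

Lemma sum_if_eq (T : finType) (t0 : T) (a b : nat) :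
  \sum_(t : T) (if t == t0 then a else b) = a + #|T|.-1 * b.
Proof.
rewrite (bigD1 t0) //= eqxx; congr (_ + _).
rewrite (eq_bigr (fun _ => b)) => [|t /negbTE-> //].
by rewrite sum_nat_const cardC1.
Qed.

Lemma double_count (T U : finType) (C : pred T) (R : T -> U -> bool) :
  \sum_(x : U) #|[set c | C c && R c x]| = \sum_(c | C c) #|[set x | R c x]|.
Proof.
rewrite (eq_bigr (fun x => \sum_c (C c && R c x))); last by move=> x _; rewrite card_set_sum.
rewrite exchange_big [RHS]big_mkcond /=; apply: eq_bigr => c _.
by rewrite card_set_sum; case: (C c) => //; rewrite big1.
Qed.

Lemma card_offdiag (T : finType) (A : {set T}) :
  #|[set xy : T * T | [&& xy.1 != xy.2, xy.1 \in A & xy.2 \in A]]| = #|A| * #|A|.-1.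
Proof.
rewrite (card_set_pair (fun x y => [&& x != y, x \in A & y \in A])) (bigID (mem A)) /=.
rewrite [X in _ + X]big1 => [|x /negbTE xA]; last first.
  by apply/eqP; rewrite cards_eq0; apply/eqP/setP=> y; rewrite !inE xA andbF.
rewrite addn0 (eq_bigr (fun _ => #|A|.-1)) ?sum_nat_const // => x xA.
by rewrite (cardsD1 x A) xA add1n /=; apply: eq_card => y; rewrite !inE eq_sym.
Qed.

Local Open Scope ring_scope.

Section FiniteFieldUnityRoots.
Variable F : finFieldType.

Lemma card_finField_gt1 : (1 < #|F|)%N.
Proof. by apply/card_gt1P; exists 0, 1; split=> //; rewrite eq_sym oner_neq0. Qed.

Lemma card_finField_pred_gt0 : (0 < #|F|.-1)%N.
Proof. by rewrite -ltnS prednK ?card_finField_gt1 // ltnW // card_finField_gt1. Qed.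

Lemma expf_card_pred (x : F) : x != 0 -> x ^+ #|F|.-1 = 1.
Proof.
move=> x0; apply: (mulfI x0); rewrite -exprS prednK ?expf_card ?mulr1 //.
exact: ltnW card_finField_gt1.
Qed.

Lemma expf_gcdn_card (x : F) k : (0 < k)%N -> x ^+ k = 1 -> x ^+ gcdn k #|F|.-1 = 1.
Proof.
move=> k0 xk; have [m m_prim m_k] := prim_order_exists k0 xk.
have x0 : x != 0 by apply: contra_eq_neq xk => ->; rewrite expr0n gtn_eqF // eq_sym oner_neq0.
apply/eqP; rewrite -(prim_order_dvd m_prim) dvdn_gcd m_k.
by rewrite (prim_order_dvd m_prim); apply/eqP/expf_card_pred.
Qed.

Lemma card_unity_roots_dvd k : (0 < k)%N -> (k %| #|F|.-1)%N ->
  #|[set x : F | x ^+ k == 1]| = k.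
Proof.
move=> k0 /dvdnP[d def_q].
have /hasP[z _ z_prim] : has #|F|.-1.-primitive_root (enum [set~ (0 : F)]).
  apply: has_prim_root; last by rewrite -cardE cardsC1.
  - exact: card_finField_pred_gt0.
  - by apply/allP=> x; rewrite mem_enum !inE unity_rootE => /expf_card_pred->.
  - exact: enum_uniq.
have d0 : (0 < d)%N by move: card_finField_pred_gt0; rewrite def_q muln_gt0 => /andP[].
have w_prim : k.-primitive_root (z ^+ d).
  have := exp_prim_root z_prim d.
  by rewrite def_q (gcdn_idPl (dvdn_mulr k (dvdnn d))) mulKn.
have -> : [set x : F | x ^+ k == 1] = [set z ^+ d ^+ i | i : 'I_k].
  apply/setP=> x; rewrite inE; apply/eqP/imsetP => [/(prim_rootP w_prim)[i ->]|[i _ ->]].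
    by exists i.
  by rewrite [_ ^+ k]exprAC (prim_expr_order w_prim) expr1n.
rewrite card_imset ?card_ord // => i j /eqP.
by rewrite (eq_prim_root_expr w_prim) !modn_small // => /eqP /val_inj.
Qed.

Lemma card_unity_roots k : (0 < k)%N ->
  #|[set x : F | x ^+ k == 1]| = gcdn k #|F|.-1.
Proof.
move=> k0; rewrite -(@card_unity_roots_dvd (gcdn k #|F|.-1)) ?gcdn_gt0 ?k0 ?dvdn_gcdr //.
apply: eq_card => x; rewrite !inE; apply/eqP/eqP => [/(expf_gcdn_card k0) //|].
move=> xg; have [m {1}->] := dvdnP (dvdn_gcdl k #|F|.-1).
by rewrite mulnC exprM xg expr1n.
Qed.

Lemma card_expf_fiber (x : F) k : x != 0 ->
  #|[set y : F | y ^+ k == x ^+ k]| = #|[set y : F | y ^+ k == 1]|.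
Proof.
move=> x0; rewrite -[RHS](card_imset _ (mulfI x0)); apply: eq_card => y; rewrite inE.
apply/eqP/imsetP => [yk|[w /[!inE]/eqP wk ->]]; last by rewrite exprMn wk mulr1.
by exists (y / x); rewrite ?inE ?expr_div_n ?yk ?divff ?expf_neq0 // mulrC divfK.
Qed.

End FiniteFieldUnityRoots.

Section CubicAlgebra.
Variable F : fieldType.
Implicit Types (c : F * F) (x y t : F).

Definition cubic c x := x ^+ 3 + c.1 * x + c.2.

(* Minus the discriminant of [cubic c]. *)
Definition cubic_disc c := 4 * c.1 ^+ 3 + 27 * c.2 ^+ 2.

Definition cubic_of_roots x y : F * F := (- (x ^+ 2 + x * y + y ^+ 2), x * y * (x + y)).

(* The Vandermonde product of the roots x, y, -x-y of [cubic (cubic_of_roots x y)]. *)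
Definition root_vandermonde x y := (x - y) * (x + 2 * y) * (2 * x + y).

Lemma cubic_of_rootsE x y t : cubic (cubic_of_roots x y) t = (t - x) * (t - y) * (t + x + y).
Proof. by rewrite /cubic /=; ring. Qed.

Lemma cubic_disc_of_roots x y : cubic_disc (cubic_of_roots x y) = - root_vandermonde x y ^+ 2.
Proof. by rewrite /cubic_disc /root_vandermonde /=; ring. Qed.

Lemma cubic_two_roots c x y :
  cubic c x = 0 -> cubic c y = 0 -> x != y -> c = cubic_of_roots x y.
Proof.
case: c => a b cx cy xy.
have : (x - y) * (x ^+ 2 + x * y + y ^+ 2 + a) = 0.
  by rewrite -[RHS](subrr 0) -{1}cx -cy /cubic /=; ring.
move/eqP; rewrite mulf_eq0 subr_eq0 (negbTE xy) addrC addr_eq0 => /eqP def_a.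
rewrite /cubic_of_roots -def_a; congr (_, _).
by rewrite -[RHS]addr0 -cx /cubic /= def_a; ring.
Qed.

End CubicAlgebra.

Section ShortWeierstrassCurves.
Variable F : finFieldType.
Hypotheses (two_neq0 : (2 : F) != 0) (three_neq0 : (3 : F) != 0).
Implicit Types (c : F * F) (v x y : F) (u : {unit F}).

Let four_neq0 : (4 : F) != 0.
Proof. by rewrite (_ : 4 = 2 * 2) ?mulf_neq0 //; ring. Qed.

Let m1_neq1 : -1 != 1 :> F.
Proof. by rewrite -subr_eq0 -opprD oppr_eq0. Qed.

Lemma card_finField_ge3 : (3 <= #|F|)%N.
Proof.
apply: leq_trans (max_card [set (0 : F); 1; -1]).
by rewrite setUC cardsU1 cards2 !inE oppr_eq0 oner_eq0 (negbTE m1_neq1) eq_sym oner_eq0.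
Qed.

Definition cubic_roots c := [set x | cubic c x == 0].
Definition curves_with_root := [set c | (cubic_disc c != 0) && (0 < #|cubic_roots c|)%N].
Definition curves_with_root_at x := [set c | (cubic_disc c != 0) && (x \in cubic_roots c)].
Definition curves_with_roots_at x y :=
  [set c | (cubic_disc c != 0) && [&& x != y, x \in cubic_roots c & y \in cubic_roots c]].

Definition curves_with_root_j0 := [set c in curves_with_root | c.1 == 0].
Definition curves_with_root_j1728 := [set c in curves_with_root | c.2 == 0].

Lemma cubic_roots_of_roots x y :
  cubic_roots (cubic_of_roots x y) = [set x; y; - x - y].
Proof.
apply/setP=> t; rewrite !inE cubic_of_rootsE !mulf_eq0 !subr_eq0 -!orbA.
by rewrite -addrA addr_eq0 opprD.
Qed.

Lemma card_cubic_roots_of_roots x y :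
  root_vandermonde x y != 0 -> #|cubic_roots (cubic_of_roots x y)| = 3%N.
Proof.
rewrite !mulf_eq0 !negb_or subr_eq0 => /andP[/andP[xy x2y] y2x].
rewrite cubic_roots_of_roots setUC cardsU1 cards2 !inE.
have -> : (- x - y == x) = (2 * x + y == 0) by rewrite -subr_eq0 -oppr_eq0; congr (_ == 0); ring.
have -> : (- x - y == y) = (x + 2 * y == 0) by rewrite -subr_eq0 -oppr_eq0; congr (_ == 0); ring.
by rewrite (negbTE x2y) (negbTE y2x) xy.
Qed.

Lemma card_cubic_roots c : cubic_disc c != 0 -> #|cubic_roots c| \in [:: 0; 1; 3]%N.
Proof.
move=> c_ns; have [|] := leqP #|cubic_roots c| 1; first by case: #|_| => [|[]].
case/card_gt1P=> x [y [/[!inE]/eqP cx /eqP cy xy]].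
move: c_ns; rewrite (cubic_two_roots cx cy xy) cubic_disc_of_roots oppr_eq0 sqrf_eq0.
by move/card_cubic_roots_of_roots->.
Qed.

Lemma odd_card_sqr v : odd #|[set y : F | y ^+ 2 == v]| = (v == 0).
Proof.
have [->|v0] := eqVneq v 0.
  by rewrite (_ : [set y | _] = [set 0]) ?cards1 //; apply/setP=> y; rewrite !inE sqrf_eq0.
have [->|[y0 /[!inE]/eqP def_v]] := set_0Vmem [set y : F | y ^+ 2 == v]; first by rewrite cards0.
have y0_neq : y0 != - y0.
  by rewrite -subr_eq0 opprK -mulr2n -mulr_natr mulf_eq0 negb_or two_neq0 andbT;
     apply: contra_neq v0 => y00; rewrite -def_v y00 expr0n.
rewrite (_ : [set y | _] = [set y0; - y0]) ?cards2 ?y0_neq //.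
by apply/setP=> y; rewrite !inE -def_v eqf_sqr.
Qed.

Lemma odd_card_curve c : cubic_disc c != 0 ->
  odd #|[set xy : F * F | xy.2 ^+ 2 == cubic c xy.1]| = (0 < #|cubic_roots c|)%N.
Proof.
move/card_cubic_roots; rewrite (card_set_pair (fun x y => y ^+ 2 == cubic c x)) odd_sum.
under eq_bigr do rewrite odd_card_sqr.
by rewrite -card_set_sum; rewrite !inE => /or3P[]/eqP->.
Qed.

Lemma card_curves_with_root_at x :
  #|curves_with_root_at x| = (#|F| - (if x == 0%R then 1 else 2))%N.
Proof.
pose r1 := - (3 * x ^+ 2) / 4; pose r2 := - (3 * x ^+ 2).
have disc_root a : cubic_disc (a, - (x ^+ 3 + a * x)) = 4 * ((a - r1) * (a - r2) ^+ 2).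
  by rewrite /cubic_disc /r1 /r2 /=; field.
have -> : curves_with_root_at x = [set (a, - (x ^+ 3 + a * x)) | a in ~: [set r1; r2]].
  apply/setP=> -[a b]; rewrite !inE /cubic /=; apply/andP/imsetP => [[ns]|[a' /[!inE]]].
    rewrite addrC addr_eq0 => /eqP def_b; exists a; last by rewrite def_b.
    move: ns; rewrite def_b disc_root !mulf_eq0 !subr_eq0 !inE.
    by apply: contra => /orP[]->; rewrite ?orbT.
  rewrite negb_or => /andP[a'r1 a'r2] [-> ->]; rewrite disc_root subrr eqxx.
  by rewrite !mulf_neq0 ?subr_eq0.
rewrite card_imset => [|a a' [] //].
rewrite cardsCs setCK cards2; congr (_ - _)%N; rewrite -if_neg.
suff -> : (r1 != r2) = (x != 0) by case: (x != 0).
rewrite -subr_eq0 (_ : r1 - r2 = (3 * 3) / 4 * x ^+ 2); last by rewrite /r1 /r2; field.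
by rewrite mulf_eq0 sqrf_eq0 !mulf_eq0 invr_eq0 (negbTE three_neq0) (negbTE four_neq0).
Qed.

Lemma card_curves_with_roots_at x y :
  #|curves_with_roots_at x y| = (root_vandermonde x y != 0) :> nat.
Proof.
rewrite -sqrf_eq0 -oppr_eq0 -cubic_disc_of_roots.
rewrite -(sum_andb_eq (fun c => cubic_disc c != 0)) card_set_sum; apply: eq_bigr => c _.
rewrite !inE; congr nat_of_bool.
apply/and4P/andP => [[ns xy /eqP cx /eqP cy]|[ns /eqP def_c]].
  by rewrite -(cubic_two_roots cx cy xy) ns.
rewrite def_c in ns *; split; rewrite ?cubic_of_rootsE ?subrr ?mulr0 ?mul0r //.
by apply: contraNneq ns => ->; rewrite cubic_disc_of_roots /root_vandermonde subrr !mul0r expr0n oppr0.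
Qed.

Lemma card_root_vandermonde_neq0 x :
  #|[set y | root_vandermonde x y != 0]| = (#|F| - (if x == 0%R then 1 else 3))%N.
Proof.
have -> : [set y | root_vandermonde x y != 0] = ~: [set x; - x / 2; - (2 * x)].
  apply/setP=> y; rewrite !inE; congr negb.
  have -> : root_vandermonde x y = - 2 * ((y - x) * (y + x / 2) * (y + 2 * x)).
    by rewrite /root_vandermonde; field.
  by rewrite mulf_eq0 oppr_eq0 (negbTE two_neq0) !mulf_eq0 !subr_eq0 !addr_eq0 mulNr orbA.
rewrite cardsCs setCK; congr (_ - _)%N; have [->|x0] := eqVneq x 0.
  by rewrite oppr0 mul0r mulr0 oppr0 !setUid cards1.
have neq (s t k : F) : k != 0 -> s - t = k * x -> s != t.
  by move=> k0 st; rewrite -subr_eq0 st mulf_neq0.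
have k3 : - 3 != 0 :> F by rewrite oppr_eq0.
have k32 : - (3 / 2) != 0 :> F by rewrite oppr_eq0 mulf_neq0 ?invr_eq0.
have k32' : 3 / 2 != 0 :> F by rewrite mulf_neq0 ?invr_eq0.
rewrite setUC cardsU1 cards2 !inE negb_or.
by rewrite (neq (- (2 * x)) x _ k3) ?(neq (- (2 * x)) (- x / 2) _ k32) ?(neq x (- x / 2) _ k32') //;
  field.
Qed.

(* Counting pairs (curve, root) and (curve, ordered pair of distinct roots): a cubic
   with n roots, n in {0, 1, 3}, satisfies 3 (n > 0) + n (n - 1) = 3 n. *)
Lemma double_count_cubic_roots :
  (3 * #|curves_with_root| + \sum_(xy : F * F) #|curves_with_roots_at xy.1 xy.2|
   = 3 * \sum_(x : F) #|curves_with_root_at x|)%N.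
Proof.
rewrite (double_count (fun c => cubic_disc c != 0) (fun c x => x \in cubic_roots c)).
rewrite (double_count (fun c => cubic_disc c != 0)
  (fun c xy => [&& xy.1 != xy.2, xy.1 \in cubic_roots c & xy.2 \in cubic_roots c])).
under eq_bigr do rewrite card_offdiag.
under [in RHS]eq_bigr do rewrite cardsE.
rewrite card_set_sum big_distrr [X in (_ + X)%N]big_mkcond big_distrr [RHS]big_mkcond.
rewrite -big_split /=; apply: eq_bigr => c _.
by case: ifP => // /card_cubic_roots; rewrite !inE => /or3P[]/eqP->.
Qed.

Lemma card_curves_with_root : (3 * #|curves_with_root| = #|F|.-1 * (2 * #|F| - 1))%N.
Proof.
have roots1 : (\sum_(x : F) #|curves_with_root_at x| = #|F|.-1 + #|F|.-1 * (#|F| - 2))%N.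
  rewrite -(sum_if_eq 0); apply: eq_bigr => x _.
  by rewrite card_curves_with_root_at; case: ifP; rewrite ?subn1.
have roots2 : (\sum_(xy : F * F) #|curves_with_roots_at xy.1 xy.2| =
               #|F|.-1 + #|F|.-1 * (#|F| - 3))%N.
  rewrite -(pair_bigA _ (fun x y => #|curves_with_roots_at x y|)) /= -(sum_if_eq 0).
  apply: eq_bigr => x _; under eq_bigr do rewrite card_curves_with_roots_at.
  by rewrite -card_set_sum card_root_vandermonde_neq0; case: ifP; rewrite ?subn1.
have := double_count_cubic_roots; rewrite roots1 roots2.
by have := card_finField_ge3; nia.
Qed.

Lemma card_curves_with_root_j1728 : #|curves_with_root_j1728| = #|F|.-1.
Proof.
rewrite -(cardsC1 (0 : F)).
rewrite -[RHS](card_imset _ (fun a a' (e : (a, 0 : F) = (a', 0)) => congr1 fst e)).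
have disc_b0 a : cubic_disc (a, 0) = 4 * a ^+ 3 by rewrite /cubic_disc /= expr0n mulr0 addr0.
apply: eq_card => -[a b]; rewrite !inE /=; apply/idP/imsetP => [/andP[/andP[ns _] /eqP b0]|].
  by exists a; rewrite ?inE ?b0 //; apply: contraNneq ns => ->; rewrite b0 disc_b0 expr0n mulr0.
case=> a' /[!inE] a'0 [-> ->]; rewrite disc_b0 mulf_neq0 ?expf_neq0 ?eqxx ?andbT //=.
by apply/card_gt0P; exists 0; rewrite inE /cubic /= expr0n mulr0 !addr0.
Qed.

Lemma card_curves_with_root_j0 : (gcdn 3 #|F|.-1 * #|curves_with_root_j0| = #|F|.-1)%N.
Proof.
pose cube_curve x : F * F := (0, - x ^+ 3).
have disc_a0 (b : F) : cubic_disc (0, b) = 27 * b ^+ 2.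
  by rewrite /cubic_disc /= expr0n mulr0 add0r.
have n27 : 27 != 0 :> F by rewrite (_ : 27 = 3 * 3 * 3) ?mulf_neq0 //; ring.
have cube_curveP c : reflect (exists2 x, x != 0 & c = cube_curve x) (c \in curves_with_root_j0).
  apply: (iffP idP) => [|[x x0 ->]].
    case: c => a b /[!inE] /andP[/andP[ns /card_gt0P[x /[!inE] cx]] /eqP /= a0].
    move: cx; rewrite /cubic a0 /= mul0r addr0 addrC addr_eq0 => /eqP b_def.
    exists x; last by rewrite b_def.
    by apply: contraNneq ns => x0; rewrite a0 b_def x0 expr0n oppr0 disc_a0 expr0n mulr0.
  rewrite !inE disc_a0 mulf_neq0 ?sqrf_eq0 ?oppr_eq0 ?expf_neq0 ?eqxx ?andbT //=.
  by apply/card_gt0P; exists x; rewrite inE /cubic /= mul0r addr0 subrr.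
have fiber c : c \in curves_with_root_j0 ->
    #|[set x | (x != 0) && (c == cube_curve x)]| = gcdn 3 #|F|.-1.
  case/cube_curveP=> x0 x00 ->; rewrite -card_unity_roots // -(card_expf_fiber 3 x00).
  apply: eq_card => x; rewrite !inE xpair_eqE eqxx eqr_opp /=.
  apply/andP/idP => [[_ /eqP->]//|/eqP x3]; split; last by rewrite x3.
  by apply: contra_eq_neq x3 => ->; rewrite expr0n eq_sym expf_neq0.
have := double_count (fun c => c \in curves_with_root_j0) (fun c x => (x != 0) && (c == cube_curve x)).
rewrite (eq_bigr _ fiber) sum_nat_const mulnC => <-.
rewrite -(cardsC1 (0 : F)) card_set_sum; apply: eq_bigr => x _.
rewrite card_set_sum; under eq_bigr do rewrite andbA.
rewrite (sum_andb_eq (fun c => (c \in curves_with_root_j0) && (x != 0))) in_set1 andbC.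
by case: eqP => //= /eqP x0; rewrite (introT (cube_curveP _)) //; exists x.
Qed.

(* Scaling (x, y) by (u^2, u^3) maps y^2 = cubic c x to y^2 = cubic (wscale c u) x. *)
Definition wscale c u : F * F := (val u ^+ 4 * c.1, val u ^+ 6 * c.2).

Lemma wscale1 : wscale^~ 1%g =1 id.
Proof. by case=> a b; rewrite /wscale /= !expr1n !mul1r. Qed.

Lemma wscaleM c : act_morph wscale c.
Proof. by move=> u v; case: c => a b; rewrite /wscale /=; congr (_, _); ring. Qed.

Definition wscale_action := TotalAction wscale1 wscaleM.

Definition curve_classes_with_root := orbit wscale_action [set: {unit F}] @: curves_with_root.

Lemma val_unit_neq0 u : val u != 0.
Proof. by rewrite -unitfE (valP u). Qed.

Lemma cubic_disc_wscale c u : cubic_disc (wscale c u) = val u ^+ 12 * cubic_disc c.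
Proof. by rewrite /cubic_disc /=; ring. Qed.

Lemma cubic_wscale c u x : cubic (wscale c u) (val u ^+ 2 * x) = val u ^+ 6 * cubic c x.
Proof. by rewrite /cubic /=; ring. Qed.

Lemma card_cubic_roots_wscale c u : #|cubic_roots (wscale c u)| = #|cubic_roots c|.
Proof.
have u2_neq0 : val u ^+ 2 != 0 by rewrite expf_neq0 ?val_unit_neq0.
rewrite -[RHS](card_imset _ (mulfI u2_neq0)); apply: eq_card => y; rewrite inE.
rewrite -[y](divfK u2_neq0) mulrC cubic_wscale mulf_eq0 expf_eq0 (negbTE (val_unit_neq0 u)).
by rewrite andbF /= mem_imset ?inE //; apply: mulfI.
Qed.

Lemma wscale_curves_with_root : [acts [set: {unit F}], on curves_with_root | wscale_action].
Proof.
apply/actsP=> u _ c; rewrite !inE /= cubic_disc_wscale card_cubic_roots_wscale.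
by rewrite mulf_eq0 expf_eq0 (negbTE (val_unit_neq0 u)) andbF.
Qed.

Lemma wscale_fixE c u : (wscale c u == c) =
  ((val u ^+ 4 == 1) || (c.1 == 0)) && ((val u ^+ 6 == 1) || (c.2 == 0)).
Proof.
have scale_fix (w t : F) : (w * t == t) = (w == 1) || (t == 0).
  by rewrite -subr_eq0 -{2}[t]mul1r -mulrBl mulf_eq0 subr_eq0.
by case: c => a b; rewrite /wscale xpair_eqE /= !scale_fix.
Qed.

Definition wscale_fix_count v : nat :=
  if v ^+ 2 == 1 then #|curves_with_root|
  else if v ^+ 2 == -1 then #|curves_with_root_j1728|
  else if v ^+ 6 == 1 then #|curves_with_root_j0| else 0.

Lemma card_wscale_fix u :
  #|('Fix_(curves_with_root | wscale_action)[u])%g| = wscale_fix_count (val u).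
Proof.
have -> : ('Fix_(curves_with_root | wscale_action)[u])%g =
          [set c in curves_with_root | wscale c u == c].
  by apply/setP=> c; rewrite in_setI [in RHS]inE; congr (_ && _); apply/afix1P/eqP.
rewrite /wscale_fix_count; set v := val u.
have v4 : v ^+ 4 = (v ^+ 2) ^+ 2 by rewrite -exprM.
have v6 : v ^+ 6 = (v ^+ 2) ^+ 3 by rewrite -exprM.
have [v2|v2_neq1] := eqVneq (v ^+ 2) 1.
  by apply: eq_card => c; rewrite !inE wscale_fixE v4 v6 v2 !expr1n eqxx andbT.
have [v2|v2_neqN1] := eqVneq (v ^+ 2) (-1).
  apply: eq_card => c; rewrite !inE wscale_fixE v4 v6 v2 sqrrN expr1n eqxx /=.
  by rewrite exprS sqrrN expr1n mulr1 (negbTE m1_neq1).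
have v4_neq1 : v ^+ 4 != 1 by rewrite v4 sqrf_eq1 negb_or v2_neq1.
case: ifP => v6_1.
  by apply: eq_card => c; rewrite !inE wscale_fixE (negbTE v4_neq1) v6_1 andbT.
apply/eqP; rewrite cards_eq0; apply/eqP/setP=> -[a b].
rewrite !inE wscale_fixE (negbTE v4_neq1) v6_1 /=; apply/negbTE.
apply/andP=> -[/andP[ns _] /andP[/eqP a0 /eqP b0]].
by move: ns; rewrite a0 b0 /cubic_disc !expr0n /= mulr0 add0r mulr0 eqxx.
Qed.

Lemma card_sqr_eq1 : #|[set x : F | x ^+ 2 == 1]| = 2%N.
Proof.
rewrite (_ : [set x | _] = [set 1; -1]) ?cards2 1?eq_sym ?m1_neq1 //.
by apply/setP=> x; rewrite !inE sqrf_eq1.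
Qed.

Lemma card_unity_roots_sqr_neq1 k : (0 < k)%N -> (2 %| k)%N ->
  #|[set x : F | (x ^+ 2 != 1) && (x ^+ k == 1)]| = (gcdn k #|F|.-1 - 2)%N.
Proof.
move=> k0 /dvdnP[m def_k].
have := cardsID [set x : F | x ^+ 2 == 1] [set x | x ^+ k == 1].
have -> : [set x : F | x ^+ k == 1] :&: [set x | x ^+ 2 == 1] = [set x | x ^+ 2 == 1].
  by apply/setIidPr/subsetP=> x; rewrite !inE def_k mulnC exprM => /eqP->; rewrite expr1n.
rewrite card_sqr_eq1 card_unity_roots // => <-; rewrite addKn.
by apply: eq_card => x; rewrite !inE.
Qed.

Lemma card_curve_classes_burnside :
  (#|curve_classes_with_root| * #|F|.-1 =
   2 * #|curves_with_root| + (gcdn 4 #|F|.-1 - 2) * #|curves_with_root_j1728|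
   + (gcdn 6 #|F|.-1 - 2) * #|curves_with_root_j0|)%N.
Proof.
rewrite -[in LHS]card_finField_unit -Frobenius_Cauchy ?wscale_curves_with_root //.
under eq_bigr do rewrite card_wscale_fix.
rewrite -(big_imset _ (in2W val_inj)) /=.
have fix0 : wscale_fix_count 0 = 0%N.
  by rewrite /wscale_fix_count !expr0n /= !(eq_sym (0 : F)) oppr_eq0 oner_eq0.
transitivity (\sum_(x : F) wscale_fix_count x)%N.
  rewrite [RHS](bigD1 0) //= fix0 add0n; apply: eq_bigl => x.
  apply/imsetP/idP => [[u _ ->]|x0]; first exact: val_unit_neq0.
  have xU : x \is a GRing.unit by rewrite unitfE.
  by exists (FinRing.unit F xU); rewrite ?in_setT.
transitivity (\sum_(x : F) ((x ^+ 2 == 1%R) * #|curves_with_root|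
   + ((x ^+ 2 != 1%R) && (x ^+ 4 == 1%R)) * #|curves_with_root_j1728|
   + ((x ^+ 2 != 1%R) && (x ^+ 6 == 1%R)) * #|curves_with_root_j0|))%N.
  apply: eq_bigr => x _; rewrite /wscale_fix_count.
  have x4 : x ^+ 4 = (x ^+ 2) ^+ 2 by rewrite -exprM.
  have x6 : x ^+ 6 = (x ^+ 2) ^+ 3 by rewrite -exprM.
  have [x2|x2_neq1] := eqVneq (x ^+ 2) 1; first by rewrite !mul0n !addn0 mul1n.
  rewrite mul0n add0n x4 x6 sqrf_eq1 (negbTE x2_neq1) /=.
  have [x2|x2_neqN1] := eqVneq (x ^+ 2) (-1).
    by rewrite x2 exprS sqrrN expr1n mulr1 (negbTE m1_neq1) mul1n addn0.
  by case: (_ == 1); rewrite /= ?mul0n ?mul1n ?add0n.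
rewrite !big_split /= -!big_distrl /= -!card_set_sum.
by rewrite card_sqr_eq1 !card_unity_roots_sqr_neq1.
Qed.

Lemma card_curve_classes_with_root :
  (gcdn 3 #|F|.-1 * (3 * #|curve_classes_with_root|) =
   gcdn 3 #|F|.-1 * (2 * (2 * #|F| - 1) + 3 * (gcdn 4 #|F|.-1 - 2)) + 3 * (gcdn 6 #|F|.-1 - 2))%N.
Proof.
apply/eqP; rewrite -(eqn_pmul2r (card_finField_pred_gt0 F)); apply/eqP.
have classes := card_curve_classes_burnside; have roots := card_curves_with_root.
have j0 := card_curves_with_root_j0; have j1728 := card_curves_with_root_j1728.
set N := #|curve_classes_with_root| in classes *; set g3 := gcdn 3 _ in j0 *.
set e4 := (gcdn 4 _ - 2)%N in classes *; set e6 := (gcdn 6 _ - 2)%N in classes *.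
transitivity (g3 * 3 * (N * #|F|.-1))%N; first by ring.
rewrite classes j1728.
transitivity (2 * g3 * (3 * #|curves_with_root|) + 3 * g3 * e4 * #|F|.-1
              + 3 * e6 * (g3 * #|curves_with_root_j0|))%N; first by ring.
by rewrite roots j0; ring.
Qed.

End ShortWeierstrassCurves.

Section PrimeField.
Variable p : nat.
Hypotheses (p_pr : prime p) (p_gt3 : (3 < p)%N).

Lemma Fp_natr_neq0 n : (0 < n < p)%N -> (n%:R : 'F_p) != 0.
Proof.
case/andP=> n_gt0 n_lt_p; rewrite -(dvdn_pcharf (pchar_Fp p_pr)).
by apply: contraL n_lt_p => /(dvdn_leq n_gt0); rewrite leqNgt.
Qed.

Lemma Fp_two_neq0 : (2 : 'F_p) != 0.
Proof. by apply: Fp_natr_neq0; lia. Qed.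

Lemma Fp_three_neq0 : (3 : 'F_p) != 0.
Proof. by apply: Fp_natr_neq0; lia. Qed.

Lemma N2_classes : N2 p = #|curve_classes_with_root 'F_p|.
Proof.
rewrite /N2; congr #|_|.
have -> : [set c : 'F_p * 'F_p | nonsingular c && has_2torsion c] = curves_with_root 'F_p.
  apply/setP=> c; rewrite !inE /has_2torsion /npoints dvdn2 /= negbK.
  rewrite -[cubic_disc c != 0]/(nonsingular c).
  by case: (boolP (nonsingular c)) => // ns; rewrite -(odd_card_curve Fp_two_neq0 ns).
have classE c : [set c' | wiso c c'] = orbit (wscale_action 'F_p) [set: {unit 'F_p}] c.
  apply/setP=> c'; rewrite inE; apply/existsP/orbitP => [[u]|[u _ <-]].
    case/andP=> /andP[u0 /eqP c'1] /eqP c'2.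
    have uU : u \is a GRing.unit by rewrite unitfE.
    by exists (FinRing.unit _ uU); rewrite ?in_setT //; case: c' c'1 c'2 => /= a b -> ->.
  by exists (val u); rewrite val_unit_neq0 !eqxx.
by rewrite (eq_imset _ classE).
Qed.

End PrimeField.

Local Close Scope ring_scope.

Lemma gcdn_mod_dvdr d m n : d %| m -> gcdn d (n %% m) = gcdn d n.
Proof. by move=> dm; rewrite -gcdn_modr modn_dvdm // gcdn_modr. Qed.

Theorem proposition9 (p : nat) : prime p -> (3 < p)%N ->
  [/\ (p %% 12 = 1)%N -> N2 p = ((4 * p + 8) %/ 3)%N,
      (p %% 12 = 5)%N -> N2 p = ((4 * p + 4) %/ 3)%N,
      (p %% 12 = 7)%N -> N2 p = ((4 * p + 2) %/ 3)%N
    & (p %% 12 = 11)%N -> N2 p = ((4 * p - 2) %/ 3)%N].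
Proof.
move=> p_pr p_gt3.
have := card_curve_classes_with_root (Fp_two_neq0 p_pr p_gt3) (Fp_three_neq0 p_pr p_gt3).
rewrite -N2_classes // card_Fp // -(@gcdn_mod_dvdr 3 12) // -(@gcdn_mod_dvdr 4 12) //.
rewrite -(@gcdn_mod_dvdr 6 12) // => classes.
split=> p_mod; move: classes; rewrite (_ : p.-1 %% 12 = p %% 12 - 1) ?p_mod; try lia.
all: set g3 := gcdn 3 _; set g4 := gcdn 4 _; set g6 := gcdn 6 _.
all: vm_compute in (value of g3), (value of g4), (value of g6); rewrite /g3 /g4 /g6; lia.
Qed.
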